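(* Let $n\ge1$, fix $\beta\in\partial\mathbb{D}$, and on $\mathbb{D}^{n-1}$ (coordinates $\alpha_0,\dots,\alpha_{n-2}$) use the Poisson bracket described in the context. Let $P_n,Q_n$ be as in the context, $F_n(z)=-Q_n(z)/P_n(z)$ and $f_n(w)=w^{-1}\frac{F_n(w)-1}{F_n(w)+1}$. Then \[ \{P_n(z),F_n(w)\}=-\frac{i}{2}\Bigl[\bigl(P_n(z)F_n(w)+Q_n(z)\bigr)\frac{z+w}{z-w}-P_n(z)-Q_n(z)F_n(w)\Bigr], \] \[ \{Q_n(z),F_n(w)\}=-F_n(w)\,\{P_n(z),F_n(w)\}, \] \[ \{P_n(z),f_n(w)\}=(1-wf_n(w))W_n(z,w),\qquad \{Q_n(z),f_n(w)\}=-(1+wf_n(w))W_n(z,w), \] where \[ W_n(z,w)=-\frac{i}{2}\,\frac{\bigl(P_n(z)+Q_n(z)\bigr)+z\bigl(P_n(z)-Q_n(z)\bigr)f_n(w)}{z-w}. \]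
   Context: Let $\rho_j=(1-|\alpha_j|^2)^{1/2}$; the Poisson bracket is $\{f,g\}=\sum_{j=0}^{n-2}i\rho_j^2\bigl(\frac{\partial f}{\partial\bar\alpha_j}\frac{\partial g}{\partial\alpha_j}-\frac{\partial f}{\partial\alpha_j}\frac{\partial g}{\partial\bar\alpha_j}\bigr)$ (Wirtinger derivatives), i.e. $\{\alpha_j,\alpha_k\}=0$, $\{\alpha_j,\bar\alpha_k\}=-i\rho_j^2\delta_{jk}$; $z,w$ are held fixed. The monic OPUC satisfy $\Phi_0=1$, $\Phi_{k+1}(z)=z\Phi_k(z)-\bar\alpha_k\Phi_k^*(z)$ with $\Phi_k^*(z)=z^k\overline{\Phi_k(1/\bar z)}$; $\Psi_k$ satisfies the same recursion with $\alpha_j$ replaced by $-\alpha_j$; $P_n(z)=z\Phi_{n-1}(z)-\bar\beta\Phi_{n-1}^*(z)$, $Q_n(z)=z\Psi_{n-1}(z)+\bar\beta\Psi_{n-1}^*(z)$. The identities hold wherever the denominators are nonzero. *)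

From Stdlib Require Import Reals List.
From Coquelicot Require Import Coquelicot.
Import ListNotations.
Open Scope C_scope.

(* Polynomials in z: lists of coefficients, index j = coefficient of z^j. *)
Definition peval (p : list C) (z : C) : C :=
  fold_right (fun c acc => c + z * acc) (RtoC 0) p.

Fixpoint padd (p q : list C) : list C :=
  match p, q with
  | [], _ => q
  | _, [] => p
  | c :: p1, d :: q1 => Cplus c d :: padd p1 q1
  end.

Definition pmulX (p : list C) : list C := RtoC 0 :: p.
Definition pscale (c : C) (p : list C) : list C := map (Cmult c) p.

(* Reversed polynomial of degree <= k:  p^*(z) = z^k * conj(p(1/conj z)),
   i.e. the coefficient of z^j is conj (coefficient of z^(k-j)). *)
Definition pstar (k : nat) (p : list C) : list C :=
  map (fun j => Cconj (nth (k - j) p (RtoC 0))) (seq 0 (S k)).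

Fixpoint Phi (a : nat -> C) (k : nat) : list C :=
  match k with
  | O => [RtoC 1]
  | S k' => padd (pmulX (Phi a k')) (pscale (- Cconj (a k')) (pstar k' (Phi a k')))
  end.

Definition Psi (a : nat -> C) (k : nat) : list C := Phi (fun j => - a j) k.

Definition Pn_op (n : nat) (beta : C) (a : nat -> C) (z : C) : C :=
  z * peval (Phi a (n - 1)) z - Cconj beta * peval (pstar (n - 1) (Phi a (n - 1))) z.

Definition Qn_op (n : nat) (beta : C) (a : nat -> C) (z : C) : C :=
  z * peval (Psi a (n - 1)) z + Cconj beta * peval (pstar (n - 1) (Psi a (n - 1))) z.

Definition Fn_op (n : nat) (beta : C) (a : nat -> C) (w : C) : C :=
  - Qn_op n beta a w / Pn_op n beta a w.

Definition fn_op (n : nat) (beta : C) (a : nat -> C) (w : C) : C :=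
  / w * ((Fn_op n beta a w - 1) / (Fn_op n beta a w + 1)).

Definition upd (a : nat -> C) (j : nat) (v : C) : nat -> C :=
  fun k => if Nat.eqb k j then v else a k.

Definition dX (f : (nat -> C) -> C) (j : nat) (a : nat -> C) : C :=
  RtoC (Derive (fun t => Re (f (upd a j (a j + RtoC t)))) 0)
  + Ci * RtoC (Derive (fun t => Im (f (upd a j (a j + RtoC t)))) 0).

Definition dY (f : (nat -> C) -> C) (j : nat) (a : nat -> C) : C :=
  RtoC (Derive (fun t => Re (f (upd a j (a j + RtoC t * Ci)))) 0)
  + Ci * RtoC (Derive (fun t => Im (f (upd a j (a j + RtoC t * Ci)))) 0).

Definition dA (f : (nat -> C) -> C) (j : nat) (a : nat -> C) : C :=
  (dX f j a - Ci * dY f j a) / 2.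
Definition dAbar (f : (nat -> C) -> C) (j : nat) (a : nat -> C) : C :=
  (dX f j a + Ci * dY f j a) / 2.

Definition PB (m : nat) (f g : (nat -> C) -> C) (a : nat -> C) : C :=
  fold_right Cplus (RtoC 0)
    (map (fun j => Ci * RtoC (1 - (Cmod (a j))^2)
                   * (dAbar f j a * dA g j a - dA f j a * dAbar g j a))
         (seq 0 m)).

(* The pair (Phi_k(z), Phi_k^*(z)) obeys the Szego recursion
   v |-> (z v1 - conj(alpha_k) v2, v2 - alpha_k z v1), so P_n(z) and Q_n(z) are the
   same linear functional (z, -conj beta) of the orbits started at (1, 1) and (1, -1).
   Each orbit is affine in (alpha_j, conj alpha_j) separately, which makes the
   Wirtinger derivatives explicit, and a Christoffel-Darboux type telescoping over j
   evaluates the bracket of two such functionals at z and w in closed form: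
   {P(z), P(w)} = {Q(z), Q(w)} = 0 and {P(z), Q(w)} = - {Q(z), P(w)} is a quadratic
   expression in P, Q divided by z - w. The brackets with F = -Q/P and f are then
   obtained from the chain rule. *)

From Stdlib Require Import Reals List Lia Lra FunctionalExtensionality.
From Coquelicot Require Import Coquelicot.
Open Scope C_scope.

Lemma peval_padd p q z : peval (padd p q) z = peval p z + peval q z.
Proof.
  revert q; induction p as [|c p IH]; intros [|d q]; simpl; try ring.
  rewrite IH; ring.
Qed.

Lemma peval_pmulX p z : peval (pmulX p) z = z * peval p z.
Proof. simpl; ring. Qed.

Lemma peval_pscale c p z : peval (pscale c p) z = c * peval p z.
Proof. induction p as [|d p IH]; simpl; [|rewrite IH]; ring. Qed.

Lemma nth_padd p q i : nth i (padd p q) 0 = nth i p 0 + nth i q 0.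
Proof.
  revert q i; induction p as [|c p IH]; intros [|d q] [|i]; simpl; try ring.
  apply IH.
Qed.

Lemma nth_pscale c p i : nth i (pscale c p) 0 = c * nth i p 0.
Proof.
  revert i; induction p as [|d p IH]; intros [|i]; simpl; try ring.
  apply IH.
Qed.

Lemma length_padd p q : length (padd p q) = Nat.max (length p) (length q).
Proof. revert q; induction p as [|c p IH]; intros [|d q]; simpl; auto. Qed.

Lemma length_pstar k p : length (pstar k p) = S k.
Proof. unfold pstar; rewrite length_map, length_seq; reflexivity. Qed.

Lemma nth_pstar k p i :
  nth i (pstar k p) 0 = if Nat.leb i k then Cconj (nth (k - i) p 0) else 0.
Proof.
  destruct (Nat.leb_spec i k).
  - unfold pstar.
    rewrite nth_indep with (d' := (fun j => Cconj (nth (k - j) p 0)) 0%nat)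
      by (rewrite length_map, length_seq; lia).
    rewrite (map_nth (fun j => Cconj (nth (k - j) p 0)) (seq 0 (S k)) 0%nat i).
    rewrite seq_nth by lia; reflexivity.
  - apply nth_overflow; rewrite length_pstar; lia.
Qed.

Lemma length_Phi a k : length (Phi a k) = S k.
Proof.
  induction k as [|k IH]; [reflexivity|].
  cbn [Phi]; rewrite length_padd.
  unfold pmulX, pscale; rewrite length_map, length_pstar; cbn [length]; lia.
Qed.

Lemma Cconj_R r : Cconj (RtoC r) = RtoC r.
Proof. unfold Cconj, RtoC; simpl; f_equal; ring. Qed.

Lemma peval_eq_nth (p q : list C) z :
  (forall i, nth i p 0 = nth i q 0) -> peval p z = peval q z.
Proof.
  assert (Hzero : forall r : list C, (forall i, nth i r 0 = 0) -> peval r z = 0).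
  { induction r as [|c r IH]; intros H; simpl; [reflexivity|].
    rewrite IH by (intros i; apply (H (S i))).
    specialize (H 0%nat); simpl in H; rewrite H; ring. }
  revert q; induction p as [|c p IH]; intros [|d q] H; simpl.
  - reflexivity.
  - symmetry; apply (Hzero (d :: q)); intros i; rewrite <- H; destruct i; reflexivity.
  - apply (Hzero (c :: p)); intros i; rewrite H; destruct i; reflexivity.
  - rewrite (IH q) by (intros i; apply (H (S i))).
    specialize (H 0%nat); simpl in H; rewrite H; reflexivity.
Qed.

Lemma nth_pstar_step k (p : list C) c i : length p = S k ->
  nth i (pstar (S k) (padd (pmulX p) (pscale c (pstar k p)))) 0
  = nth i (padd (pstar k p) (pscale (Cconj c) (pmulX p))) 0.
Proof.
  intros Hl.
  rewrite !nth_padd, !nth_pscale, !nth_pstar, nth_padd, nth_pscale, nth_pstar.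
  unfold pmulX; rewrite Cplus_conj, Cmult_conj.
  destruct i as [|i].
  - rewrite !Nat.sub_0_r, (proj2 (Nat.leb_gt (S k) k)) by lia.
    cbn [Nat.leb nth]; rewrite Cconj_R; ring.
  - destruct (Nat.lt_total i k) as [Hik|[->|Hik]].
    + rewrite (proj2 (Nat.leb_le (S i) (S k))), (proj2 (Nat.leb_le (S i) k)),
        (proj2 (Nat.leb_le (S k - S i) k)) by lia.
      replace (S k - S i)%nat with (S (k - S i)) by lia.
      replace (k - S (k - S i))%nat with i by lia.
      simpl; rewrite Cconj_conj; reflexivity.
    + rewrite Nat.leb_refl, (proj2 (Nat.leb_gt (S k) k)), Nat.sub_diag by lia.
      simpl; rewrite Nat.sub_0_r, Cconj_conj, Cconj_R; ring.
    + rewrite (proj2 (Nat.leb_gt (S i) (S k))), (proj2 (Nat.leb_gt (S i) k)) by lia.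
      simpl; rewrite nth_overflow by lia; ring.
Qed.

Lemma peval_pstar_step k p c z : length p = S k ->
  peval (pstar (S k) (padd (pmulX p) (pscale c (pstar k p)))) z
  = peval (pstar k p) z + Cconj c * (z * peval p z).
Proof.
  intros Hl.
  rewrite (peval_eq_nth _ _ z (fun i => nth_pstar_step k p c i Hl)).
  rewrite peval_padd, peval_pscale, peval_pmulX; reflexivity.
Qed.

(** * The Szego recursion *)

Definition szego_step (al z : C) (v : C * C) : C * C :=
  (z * fst v - Cconj al * snd v, snd v - al * z * fst v).

Fixpoint szego_orbit (a : nat -> C) (z : C) (v : C * C) (k : nat) : C * C :=
  match k with
  | O => v
  | S k' => szego_step (a k') z (szego_orbit a z v k')
  end.

Lemma Phi_szego_orbit a z k :
  (peval (Phi a k) z, peval (pstar k (Phi a k)) z) = szego_orbit a z (RtoC 1, RtoC 1) k.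
Proof.
  induction k as [|k IH].
  - simpl; rewrite Cconj_R; f_equal; ring.
  - cbn [Phi szego_orbit]; rewrite <- IH; unfold szego_step; cbn [fst snd]; f_equal.
    + rewrite peval_padd, peval_pmulX, peval_pscale; ring.
    + rewrite peval_pstar_step by apply length_Phi.
      rewrite Copp_conj, Cconj_conj; ring.
Qed.

Definition reflect (v : C * C) : C * C := (fst v, - snd v).

(* Conjugating the step by diag(1, -1) flips the sign of alpha. *)
Lemma szego_orbit_opp a z v k :
  szego_orbit (fun j => - a j) z v k = reflect (szego_orbit a z (reflect v) k).
Proof.
  induction k as [|k IH]; cbn [szego_orbit].
  - destruct v; unfold reflect; simpl; f_equal; ring.
  - rewrite IH; destruct (szego_orbit a z (reflect v) k) as [x y].
    unfold szego_step, reflect; simpl; rewrite Copp_conj; f_equal; ring.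
Qed.

Lemma szego_orbit_lin a z s t p q k :
  szego_orbit a z (s * fst p + t * fst q, s * snd p + t * snd q) k
  = (s * fst (szego_orbit a z p k) + t * fst (szego_orbit a z q k),
     s * snd (szego_orbit a z p k) + t * snd (szego_orbit a z q k)).
Proof.
  induction k as [|k IH]; [reflexivity|].
  cbn [szego_orbit]; rewrite IH; unfold szego_step; simpl; f_equal; ring.
Qed.

Definition dot (l v : C * C) : C := fst l * fst v + snd l * snd v.

Definition Pn_vec (n : nat) (beta : C) (v : C * C) (a : nat -> C) (z : C) : C :=
  dot (z, - Cconj beta) (szego_orbit a z v (n - 1)).

Lemma Pn_op_vec n beta a z : Pn_op n beta a z = Pn_vec n beta (RtoC 1, RtoC 1) a z.
Proof.
  unfold Pn_op, Pn_vec, dot; rewrite <- Phi_szego_orbit; simpl; ring.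
Qed.

Lemma Qn_op_vec n beta a z : Qn_op n beta a z = Pn_vec n beta (RtoC 1, - RtoC 1) a z.
Proof.
  pose proof (Phi_szego_orbit (fun j => - a j) z (n - 1)) as E.
  rewrite szego_orbit_opp in E; unfold reflect in E; cbn [fst snd] in E.
  apply pair_equal_spec in E as [E1 E2].
  unfold Qn_op, Psi, Pn_vec, dot; rewrite E1, E2; simpl; ring.
Qed.

Lemma dot_szego_orbit_decomp l a z x y k :
  dot l (szego_orbit a z (x, y) k)
  = ((x + y) * dot l (szego_orbit a z (RtoC 1, RtoC 1) k)
     + (x - y) * dot l (szego_orbit a z (RtoC 1, - RtoC 1) k)) / 2.
Proof.
  replace (x, y) with ((x + y) / 2 * fst (RtoC 1, RtoC 1) + (x - y) / 2 * fst (RtoC 1, - RtoC 1),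
                       (x + y) / 2 * snd (RtoC 1, RtoC 1) + (x - y) / 2 * snd (RtoC 1, - RtoC 1))
    by (simpl; f_equal; field).
  rewrite szego_orbit_lin; unfold dot; simpl; field.
Qed.

(** * Dependence on a single coefficient *)

Lemma upd_same a j u : upd a j u j = u.
Proof. unfold upd; rewrite Nat.eqb_refl; reflexivity. Qed.

Lemma upd_other a j u k : k <> j -> upd a j u k = a k.
Proof. intros H; unfold upd; apply Nat.eqb_neq in H; rewrite H; reflexivity. Qed.

Lemma szego_orbit_upd_low a j u z v k :
  (k <= j)%nat -> szego_orbit (upd a j u) z v k = szego_orbit a z v k.
Proof.
  induction k as [|k IH]; intros H; [reflexivity|].
  cbn [szego_orbit]; rewrite IH, upd_other by lia; reflexivity.
Qed.

Fixpoint orbit_dA (a : nat -> C) (z : C) (v : C * C) (k j : nat) : C * C :=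
  match k with
  | O => (RtoC 0, RtoC 0)
  | S k' =>
      if Nat.ltb j k' then szego_step (a k') z (orbit_dA a z v k' j)
      else if Nat.eqb j k' then (RtoC 0, - (z * fst (szego_orbit a z v k')))
      else (RtoC 0, RtoC 0)
  end.

Fixpoint orbit_dAbar (a : nat -> C) (z : C) (v : C * C) (k j : nat) : C * C :=
  match k with
  | O => (RtoC 0, RtoC 0)
  | S k' =>
      if Nat.ltb j k' then szego_step (a k') z (orbit_dAbar a z v k' j)
      else if Nat.eqb j k' then (- snd (szego_orbit a z v k'), RtoC 0)
      else (RtoC 0, RtoC 0)
  end.

Definition szego_adj (al z : C) (l : C * C) : C * C :=
  (z * fst l - al * z * snd l, - Cconj al * fst l + snd l).

Lemma dot_szego_step al z l v : dot l (szego_step al z v) = dot (szego_adj al z l) v.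
Proof. unfold dot, szego_step, szego_adj; simpl; ring. Qed.

Lemma dot_szego_orbit_upd l a j u z v k :
  dot l (szego_orbit (upd a j u) z v k)
  = dot l (szego_orbit a z v k) + (u - a j) * dot l (orbit_dA a z v k j)
    + Cconj (u - a j) * dot l (orbit_dAbar a z v k j).
Proof.
  revert l; induction k as [|k IH]; intros l.
  - unfold dot; simpl; ring.
  - cbn [szego_orbit orbit_dA orbit_dAbar].
    destruct (Nat.ltb_spec j k).
    + rewrite upd_other by lia; rewrite !dot_szego_step, IH; ring.
    + rewrite szego_orbit_upd_low by lia.
      destruct (Nat.eqb_spec j k) as [<-|].
      * rewrite upd_same, Cminus_conj; unfold dot, szego_step; simpl; ring.
      * rewrite upd_other by lia; unfold dot; simpl; ring.
Qed.

(** * A Christoffel-Darboux identity *)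

Definition sumC (m : nat) (f : nat -> C) : C := fold_right Cplus 0 (map f (seq 0 m)).

Lemma sumC_S m f : sumC (S m) f = sumC m f + f m.
Proof.
  unfold sumC; rewrite seq_S, map_app, fold_right_app; simpl.
  generalize (map f (seq 0 m)); induction l as [|x l IH]; simpl; [|rewrite IH]; ring.
Qed.

Lemma sumC_ext m f g : (forall j, (j < m)%nat -> f j = g j) -> sumC m f = sumC m g.
Proof.
  induction m as [|m IH]; intros H; [reflexivity|].
  rewrite !sumC_S, IH, H by auto with arith; reflexivity.
Qed.

Lemma sumC_lin m f g u v :
  sumC m (fun j => u * f j + v * g j) = u * sumC m f + v * sumC m g.
Proof.
  induction m as [|m IH]; [unfold sumC; simpl; ring|].
  rewrite !sumC_S, IH; ring.
Qed.

Definition det2 (x y : C * C) : C := fst x * snd y - snd x * fst y.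

Lemma rho2_conj x : RtoC (1 - Cmod x ^ 2) = 1 - x * Cconj x.
Proof.
  rewrite <- Cmod2_conj; unfold RtoC, Cminus, Cplus, Copp, Cmult; simpl; f_equal; ring.
Qed.

Lemma orbit_dA_lt a z v m j :
  (j < m)%nat -> orbit_dA a z v (S m) j = szego_step (a m) z (orbit_dA a z v m j).
Proof. intros H; cbn [orbit_dA]; rewrite (proj2 (Nat.ltb_lt j m) H); reflexivity. Qed.

Lemma orbit_dAbar_lt a z v m j :
  (j < m)%nat -> orbit_dAbar a z v (S m) j = szego_step (a m) z (orbit_dAbar a z v m j).
Proof. intros H; cbn [orbit_dAbar]; rewrite (proj2 (Nat.ltb_lt j m) H); reflexivity. Qed.

Lemma orbit_dA_last a z v m :
  orbit_dA a z v (S m) m = (RtoC 0, - (z * fst (szego_orbit a z v m))).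
Proof. cbn [orbit_dA]; rewrite Nat.ltb_irrefl, Nat.eqb_refl; reflexivity. Qed.

Lemma orbit_dAbar_last a z v m :
  orbit_dAbar a z v (S m) m = (- snd (szego_orbit a z v m), RtoC 0).
Proof. cbn [orbit_dAbar]; rewrite Nat.ltb_irrefl, Nat.eqb_refl; reflexivity. Qed.

Definition bracket_term a z w p q l mu m j : C :=
  Ci * RtoC (1 - Cmod (a j) ^ 2) *
  (dot l (orbit_dAbar a z p m j) * dot mu (orbit_dA a w q m j)
   - dot l (orbit_dA a z p m j) * dot mu (orbit_dAbar a w q m j)).

(* A Christoffel-Darboux identity: after moving the steps onto [l] and [mu] with
   [szego_adj], the term [j = m] is exactly the increment of the right-hand side. *)
Theorem christoffel_darboux_bracket a z w p q : z <> w -> forall m l mu,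
  sumC m (bracket_term a z w p q l mu m)
  = Ci / (z - w) *
    (det2 (szego_orbit a z p m) (szego_orbit a w q m) * (w * fst l * snd mu - z * snd l * fst mu)
     - det2 p q * (w * dot l (szego_orbit a z (RtoC 1, RtoC 0) m)
                     * dot mu (szego_orbit a w (RtoC 0, RtoC 1) m)
                   - z * dot l (szego_orbit a z (RtoC 0, RtoC 1) m)
                     * dot mu (szego_orbit a w (RtoC 1, RtoC 0) m))).
Proof.
  intros Hzw; pose proof (Cminus_eq_contra _ _ Hzw) as Hzw'.
  induction m as [|m IH]; intros l mu.
  - unfold sumC, det2, dot; cbn; field; exact Hzw'.
  - rewrite sumC_S.
    rewrite (sumC_ext m _ (bracket_term a z w p q (szego_adj (a m) z l) (szego_adj (a m) w mu) m)).
    2:{ intros j Hj; unfold bracket_term.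
        rewrite orbit_dA_lt, orbit_dAbar_lt, orbit_dA_lt, orbit_dAbar_lt by exact Hj.
        rewrite !dot_szego_step; reflexivity. }
    rewrite IH; unfold bracket_term.
    rewrite orbit_dA_last, orbit_dAbar_last, orbit_dA_last, orbit_dAbar_last.
    cbn [szego_orbit]; rewrite !dot_szego_step, rho2_conj.
    destruct (szego_orbit a z p m) as [x1 x2], (szego_orbit a w q m) as [y1 y2],
      (szego_orbit a z (RtoC 1, RtoC 0) m) as [u1 u2], (szego_orbit a z (RtoC 0, RtoC 1) m) as [v1 v2],
      (szego_orbit a w (RtoC 1, RtoC 0) m) as [s1 s2], (szego_orbit a w (RtoC 0, RtoC 1) m) as [t1 t2],
      l as [l1 l2], mu as [m1 m2].
    unfold det2, dot, szego_step, szego_adj; cbn [fst snd]; field; exact Hzw'.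
Qed.

(** * Wirtinger derivatives *)

Definition has_cderive (g : R -> C) (d : C) : Prop :=
  is_derive (fun t => Re (g t)) 0%R (Re d) /\ is_derive (fun t => Im (g t)) 0%R (Im d).

Lemma has_cderive_ext g h d :
  (forall t, g t = h t) -> has_cderive g d -> has_cderive h d.
Proof.
  intros E [H1 H2]; split.
  - apply (is_derive_ext (fun t => Re (g t))); [intros t; rewrite E|]; auto.
  - apply (is_derive_ext (fun t => Im (g t))); [intros t; rewrite E|]; auto.
Qed.

Lemma has_cderive_eq g d d' : has_cderive g d -> d = d' -> has_cderive g d'.
Proof. intros H <-; exact H. Qed.

Lemma has_cderive_const c : has_cderive (fun _ => c) 0.
Proof. split; exact (is_derive_const (K := R_AbsRing) _ 0%R). Qed.

Lemma has_cderive_id : has_cderive (fun t => RtoC t) 1.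
Proof.
  split; [exact (is_derive_id (K := R_AbsRing) 0%R)
         | exact (is_derive_const (K := R_AbsRing) 0%R 0%R)].
Qed.

Lemma has_cderive_plus g h dg dh :
  has_cderive g dg -> has_cderive h dh -> has_cderive (fun t => g t + h t) (dg + dh).
Proof.
  intros [G1 G2] [H1 H2]; split; [exact (is_derive_plus _ _ _ _ _ G1 H1)
                                 | exact (is_derive_plus _ _ _ _ _ G2 H2)].
Qed.

Lemma has_cderive_opp g dg : has_cderive g dg -> has_cderive (fun t => - g t) (- dg).
Proof.
  intros [G1 G2]; split; [exact (is_derive_opp _ _ _ G1) | exact (is_derive_opp _ _ _ G2)].
Qed.

Lemma has_cderive_mult g h dg dh : has_cderive g dg -> has_cderive h dh ->
  has_cderive (fun t => g t * h t) (dg * h 0%R + g 0%R * dh).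
Proof.
  intros [G1 G2] [H1 H2]; split.
  - replace (Re (dg * h 0%R + g 0%R * dh))
      with (Re dg * Re (h 0%R) + Re (g 0%R) * Re dh
            - (Im dg * Im (h 0%R) + Im (g 0%R) * Im dh))%R by (unfold Re, Im; simpl; ring).
    exact (is_derive_minus _ _ _ _ _ (is_derive_mult _ _ _ _ _ G1 H1 Rmult_comm)
             (is_derive_mult _ _ _ _ _ G2 H2 Rmult_comm)).
  - replace (Im (dg * h 0%R + g 0%R * dh))
      with (Re dg * Im (h 0%R) + Re (g 0%R) * Im dh
            + (Im dg * Re (h 0%R) + Im (g 0%R) * Re dh))%R by (unfold Re, Im; simpl; ring).
    exact (is_derive_plus _ _ _ _ _ (is_derive_mult _ _ _ _ _ G1 H2 Rmult_comm)
             (is_derive_mult _ _ _ _ _ G2 H1 Rmult_comm)).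
Qed.

Lemma has_cderive_inv g dg : has_cderive g dg -> g 0%R <> 0 ->
  has_cderive (fun t => / g t) (- dg / (g 0%R * g 0%R)).
Proof.
  intros [G1 G2] Hz.
  pose proof (is_derive_plus _ _ _ _ _ (is_derive_pow _ 2 _ _ G1) (is_derive_pow _ 2 _ _ G2))
    as DN.
  assert (HN : (Re (g 0%R) ^ 2 + Im (g 0%R) ^ 2 <> 0)%R).
  { intros H; apply Hz; destruct (g 0%R) as [x y]; unfold Re, Im in H; simpl in H.
    unfold RtoC; f_equal; nra. }
  split.
  - pose proof (is_derive_div _ _ _ _ _ G1 DN HN) as D.
    match type of D with is_derive _ _ ?v => replace (Re (- dg / (g 0%R * g 0%R))) with v end;
      [exact D|].
    destruct (g 0%R) as [x y], dg as [p q]; unfold Re, Im, plus, opp in *; simpl in *.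
    field; split; intros H; apply HN; nra.
  - pose proof (is_derive_div _ _ _ _ _ (is_derive_opp _ _ _ G2) DN HN) as D.
    match type of D with is_derive _ _ ?v => replace (Im (- dg / (g 0%R * g 0%R))) with v end;
      [exact D|].
    destruct (g 0%R) as [x y], dg as [p q]; unfold Re, Im, plus, opp in *; simpl in *.
    field; split; intros H; apply HN; nra.
Qed.

Lemma has_cderive_Derive g d : has_cderive g d ->
  RtoC (Derive (fun t => Re (g t)) 0) + Ci * RtoC (Derive (fun t => Im (g t)) 0) = d.
Proof.
  intros [H1 H2].
  replace (Derive (fun t => Re (g t)) 0) with (Re d) by (symmetry; apply is_derive_unique; exact H1).
  replace (Derive (fun t => Im (g t)) 0) with (Im d) by (symmetry; apply is_derive_unique; exact H2).
  destruct d as [x y]; unfold RtoC, Ci, Cmult, Cplus, Re, Im; simpl; f_equal; ring.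
Qed.

(* [d1] and [d2] play the roles of dX/d(alpha_j) and dX/d(conj alpha_j): moving
   [alpha_j] along [t] and along [i t] changes [X] at rates [d1 + d2] and [i (d1 - d2)]. *)
Definition has_wirtinger (X : (nat -> C) -> C) (j : nat) (a : nat -> C) (d1 d2 : C) : Prop :=
  has_cderive (fun t => X (upd a j (a j + RtoC t))) (d1 + d2)
  /\ has_cderive (fun t => X (upd a j (a j + RtoC t * Ci))) (Ci * d1 - Ci * d2).

Lemma upd_add0 a j (e : C) : e = 0 -> upd a j (a j + e) = a.
Proof.
  intros ->; apply functional_extensionality; intros k; unfold upd.
  destruct (Nat.eqb_spec k j) as [->|]; [ring | reflexivity].
Qed.

Lemma has_wirtinger_eq X j a d1 d2 d1' d2' :
  has_wirtinger X j a d1 d2 -> d1 = d1' -> d2 = d2' -> has_wirtinger X j a d1' d2'.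
Proof. intros H <- <-; exact H. Qed.

Lemma has_wirtinger_const c j a : has_wirtinger (fun _ => c) j a 0 0.
Proof. split; (eapply has_cderive_eq; [apply has_cderive_const | ring]). Qed.

Lemma has_wirtinger_add X Y j a x1 x2 y1 y2 :
  has_wirtinger X j a x1 x2 -> has_wirtinger Y j a y1 y2 ->
  has_wirtinger (fun b => X b + Y b) j a (x1 + y1) (x2 + y2).
Proof.
  intros [X1 X2] [Y1 Y2]; split.
  - eapply has_cderive_eq; [exact (has_cderive_plus _ _ _ _ X1 Y1) | ring].
  - eapply has_cderive_eq; [exact (has_cderive_plus _ _ _ _ X2 Y2) | ring].
Qed.

Lemma has_wirtinger_opp X j a x1 x2 :
  has_wirtinger X j a x1 x2 -> has_wirtinger (fun b => - X b) j a (- x1) (- x2).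
Proof.
  intros [X1 X2]; split.
  - eapply has_cderive_eq; [exact (has_cderive_opp _ _ X1) | ring].
  - eapply has_cderive_eq; [exact (has_cderive_opp _ _ X2) | ring].
Qed.

Lemma has_wirtinger_mul X Y j a x1 x2 y1 y2 :
  has_wirtinger X j a x1 x2 -> has_wirtinger Y j a y1 y2 ->
  has_wirtinger (fun b => X b * Y b) j a (x1 * Y a + X a * y1) (x2 * Y a + X a * y2).
Proof.
  intros [X1 X2] [Y1 Y2]; split.
  - eapply has_cderive_eq; [exact (has_cderive_mult _ _ _ _ X1 Y1)|].
    cbv beta; rewrite upd_add0 by ring; ring.
  - eapply has_cderive_eq; [exact (has_cderive_mult _ _ _ _ X2 Y2)|].
    cbv beta; rewrite upd_add0 by ring; ring.
Qed.

Lemma has_wirtinger_inv (X : (nat -> C) -> C) j a x1 x2 : X a <> 0 ->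
  has_wirtinger X j a x1 x2 ->
  has_wirtinger (fun b => / X b) j a (- x1 / (X a * X a)) (- x2 / (X a * X a)).
Proof.
  intros Hz [X1 X2]; split.
  - eapply has_cderive_eq; [apply (has_cderive_inv _ _ X1)|];
      cbv beta; rewrite upd_add0 by ring; [exact Hz | field; exact Hz].
  - eapply has_cderive_eq; [apply (has_cderive_inv _ _ X2)|];
      cbv beta; rewrite upd_add0 by ring; [exact Hz | field; exact Hz].
Qed.

Lemma has_wirtinger_div (X Y : (nat -> C) -> C) j a x1 x2 y1 y2 : Y a <> 0 ->
  has_wirtinger X j a x1 x2 -> has_wirtinger Y j a y1 y2 ->
  has_wirtinger (fun b => X b / Y b) j a
    ((x1 * Y a - X a * y1) / (Y a * Y a)) ((x2 * Y a - X a * y2) / (Y a * Y a)).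
Proof.
  intros Hz HX HY.
  eapply has_wirtinger_eq;
    [exact (has_wirtinger_mul _ _ _ _ _ _ _ _ HX (has_wirtinger_inv _ _ _ _ _ Hz HY))
    | cbv beta; field; exact Hz | cbv beta; field; exact Hz].
Qed.

Lemma Cconj_RtoC_Ci (t : R) : Cconj (RtoC t * Ci) = - (RtoC t * Ci).
Proof. unfold Cconj, RtoC, Ci, Cmult, Copp; simpl; f_equal; ring. Qed.

Lemma has_wirtinger_affine X j a d1 d2 :
  (forall u, X (upd a j u) = X a + (u - a j) * d1 + Cconj (u - a j) * d2) ->
  has_wirtinger X j a d1 d2.
Proof.
  intros E; split.
  - apply has_cderive_ext with (g := fun t => X a + RtoC t * (d1 + d2)).
    { intros t; rewrite E; replace (a j + RtoC t - a j) with (RtoC t) by ring.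
      rewrite Cconj_R; ring. }
    eapply has_cderive_eq.
    { apply has_cderive_plus;
        [apply has_cderive_const | apply has_cderive_mult; [apply has_cderive_id | apply has_cderive_const]]. }
    cbv beta; ring.
  - apply has_cderive_ext with (g := fun t => X a + RtoC t * (Ci * d1 - Ci * d2)).
    { intros t; rewrite E; replace (a j + RtoC t * Ci - a j) with (RtoC t * Ci) by ring.
      rewrite Cconj_RtoC_Ci; ring. }
    eapply has_cderive_eq.
    { apply has_cderive_plus;
        [apply has_cderive_const | apply has_cderive_mult; [apply has_cderive_id | apply has_cderive_const]]. }
    cbv beta; ring.
Qed.

Lemma dA_has_wirtinger X j a d1 d2 :
  has_wirtinger X j a d1 d2 -> dA X j a = d1 /\ dAbar X j a = d2.
Proof.
  intros [H1 H2]; unfold dA, dAbar, dX, dY.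
  rewrite (has_cderive_Derive _ _ H1), (has_cderive_Derive _ _ H2).
  assert (Hii : Ci * Ci = - 1) by (unfold Ci, Cmult, Copp, RtoC; simpl; f_equal; ring).
  replace (Ci * (Ci * d1 - Ci * d2)) with (Ci * Ci * (d1 - d2)) by ring.
  rewrite Hii; split; field.
Qed.

Lemma has_wirtinger_dA X j a d1 d2 :
  has_wirtinger X j a d1 d2 -> has_wirtinger X j a (dA X j a) (dAbar X j a).
Proof. intros H; destruct (dA_has_wirtinger _ _ _ _ _ H) as [-> ->]; exact H. Qed.

(** * Poisson brackets *)

Lemma PB_sumC m X Y a :
  PB m X Y a = sumC m (fun j => Ci * RtoC (1 - Cmod (a j) ^ 2)
                                * (dAbar X j a * dA Y j a - dA X j a * dAbar Y j a)).
Proof. reflexivity. Qed.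

Lemma PB_lin_r m X Y U V a c d :
  (forall j, (j < m)%nat ->
     dA Y j a = c * dA U j a + d * dA V j a
     /\ dAbar Y j a = c * dAbar U j a + d * dAbar V j a) ->
  PB m X Y a = c * PB m X U a + d * PB m X V a.
Proof.
  intros H; rewrite !PB_sumC, <- sumC_lin.
  apply sumC_ext; intros j Hj; destruct (H j Hj) as [-> ->]; ring.
Qed.

Lemma PB_scale_r m X Y U a c :
  (forall j, (j < m)%nat -> dA Y j a = c * dA U j a /\ dAbar Y j a = c * dAbar U j a) ->
  PB m X Y a = c * PB m X U a.
Proof.
  intros H; rewrite (PB_lin_r m X Y U U a c 0); [ring|].
  intros j Hj; destruct (H j Hj) as [-> ->]; split; ring.
Qed.

Lemma PB_wirtinger m X Y a (x1 x2 y1 y2 : nat -> C) :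
  (forall j, (j < m)%nat -> has_wirtinger X j a (x1 j) (x2 j)) ->
  (forall j, (j < m)%nat -> has_wirtinger Y j a (y1 j) (y2 j)) ->
  PB m X Y a = sumC m (fun j => Ci * RtoC (1 - Cmod (a j) ^ 2) * (x2 j * y1 j - x1 j * y2 j)).
Proof.
  intros HX HY; rewrite PB_sumC; apply sumC_ext; intros j Hj.
  destruct (dA_has_wirtinger _ _ _ _ _ (HX j Hj)) as [-> ->].
  destruct (dA_has_wirtinger _ _ _ _ _ (HY j Hj)) as [-> ->].
  reflexivity.
Qed.

Lemma has_wirtinger_Pn_vec n beta v x j a :
  has_wirtinger (fun b => Pn_vec n beta v b x) j a
    (dot (x, - Cconj beta) (orbit_dA a x v (n - 1) j))
    (dot (x, - Cconj beta) (orbit_dAbar a x v (n - 1) j)).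
Proof. apply has_wirtinger_affine; intros u; apply dot_szego_orbit_upd. Qed.

Lemma Pn_op_fun n beta x :
  (fun b => Pn_op n beta b x) = (fun b => Pn_vec n beta (RtoC 1, RtoC 1) b x).
Proof. apply functional_extensionality; intros b; apply Pn_op_vec. Qed.

Lemma Qn_op_fun n beta x :
  (fun b => Qn_op n beta b x) = (fun b => Pn_vec n beta (RtoC 1, - RtoC 1) b x).
Proof. apply functional_extensionality; intros b; apply Qn_op_vec. Qed.

Lemma PB_Pn_vec n beta a z w p q : z <> w ->
  PB (n - 1) (fun b => Pn_vec n beta p b z) (fun b => Pn_vec n beta q b w) a
  = Ci * det2 p q / (4 * (z - w)) *
    (z * (Pn_op n beta a z - Qn_op n beta a z) * (Pn_op n beta a w + Qn_op n beta a w)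
     - w * (Pn_op n beta a z + Qn_op n beta a z) * (Pn_op n beta a w - Qn_op n beta a w)).
Proof.
  intros Hzw.
  rewrite (PB_wirtinger _ _ _ _ _ _ _ _ (fun j _ => has_wirtinger_Pn_vec n beta p z j a)
             (fun j _ => has_wirtinger_Pn_vec n beta q w j a)).
  fold (bracket_term a z w p q (z, - Cconj beta) (w, - Cconj beta) (n - 1)).
  rewrite christoffel_darboux_bracket by exact Hzw.
  rewrite !Pn_op_vec, !Qn_op_vec; unfold Pn_vec.
  rewrite !(dot_szego_orbit_decomp _ _ _ (RtoC 1) (RtoC 0)),
    !(dot_szego_orbit_decomp _ _ _ (RtoC 0) (RtoC 1)).
  cbn [fst snd]; field; exact (Cminus_eq_contra _ _ Hzw).
Qed.

Lemma has_wirtinger_Pn_op n beta x j a :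
  has_wirtinger (fun b => Pn_op n beta b x) j a
    (dA (fun b => Pn_op n beta b x) j a) (dAbar (fun b => Pn_op n beta b x) j a).
Proof. rewrite Pn_op_fun; eapply has_wirtinger_dA, has_wirtinger_Pn_vec. Qed.

Lemma has_wirtinger_Qn_op n beta x j a :
  has_wirtinger (fun b => Qn_op n beta b x) j a
    (dA (fun b => Qn_op n beta b x) j a) (dAbar (fun b => Qn_op n beta b x) j a).
Proof. rewrite Qn_op_fun; eapply has_wirtinger_dA, has_wirtinger_Pn_vec. Qed.

Lemma has_wirtinger_Fn_op n beta w j a : Pn_op n beta a w <> 0 ->
  has_wirtinger (fun b => Fn_op n beta b w) j a
    ((- dA (fun b => Qn_op n beta b w) j a * Pn_op n beta a w
      + Qn_op n beta a w * dA (fun b => Pn_op n beta b w) j a)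
     / (Pn_op n beta a w * Pn_op n beta a w))
    ((- dAbar (fun b => Qn_op n beta b w) j a * Pn_op n beta a w
      + Qn_op n beta a w * dAbar (fun b => Pn_op n beta b w) j a)
     / (Pn_op n beta a w * Pn_op n beta a w)).
Proof.
  intros HP.
  eapply has_wirtinger_eq;
    [exact (has_wirtinger_div _ _ _ _ _ _ _ _ HP
              (has_wirtinger_opp _ _ _ _ _ (has_wirtinger_Qn_op n beta w j a))
              (has_wirtinger_Pn_op n beta w j a)) | cbv beta; field; exact HP..].
Qed.

Lemma PB_Fn_r m X n beta a w : Pn_op n beta a w <> 0 ->
  PB m X (fun b => Fn_op n beta b w) a
  = - / Pn_op n beta a w * PB m X (fun b => Qn_op n beta b w) a
    + Qn_op n beta a w / (Pn_op n beta a w * Pn_op n beta a w)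
      * PB m X (fun b => Pn_op n beta b w) a.
Proof.
  intros HP; apply PB_lin_r; intros j _.
  destruct (dA_has_wirtinger _ _ _ _ _ (has_wirtinger_Fn_op n beta w j a HP)) as [-> ->].
  split; field; exact HP.
Qed.

Lemma PB_fn_r m X n beta a w : Pn_op n beta a w <> 0 -> w <> 0 ->
  Fn_op n beta a w + 1 <> 0 ->
  PB m X (fun b => fn_op n beta b w) a
  = 2 / (w * (Fn_op n beta a w + 1) * (Fn_op n beta a w + 1))
    * PB m X (fun b => Fn_op n beta b w) a.
Proof.
  intros HP Hw HF; apply PB_scale_r; intros j _.
  pose proof (has_wirtinger_Fn_op n beta w j a HP) as hF.
  apply has_wirtinger_dA in hF.
  pose proof (has_wirtinger_mul _ _ _ _ _ _ _ _ (has_wirtinger_const (/ w) j a)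
    (has_wirtinger_div _ _ _ _ _ _ _ _ HF
       (has_wirtinger_add _ _ _ _ _ _ _ _ hF (has_wirtinger_const (- RtoC 1) j a))
       (has_wirtinger_add _ _ _ _ _ _ _ _ hF (has_wirtinger_const 1 j a)))) as hf.
  destruct (dA_has_wirtinger (fun b => fn_op n beta b w) _ _ _ _ hf) as [-> ->].
  split; field; auto.
Qed.

Theorem theorem13p2 (n : nat) (beta : C) (a : nat -> C) (z w : C) :
  (1 <= n)%nat ->
  Cmod beta = 1%R ->
  (forall j, (j < n - 1)%nat -> (Cmod (a j) < 1)%R) ->
  z <> w ->
  Pn_op n beta a w <> RtoC 0 ->
  let P := fun b => Pn_op n beta b z in
  let Q := fun b => Qn_op n beta b z in
  let F := fun b => Fn_op n beta b w in
  let f := fun b => fn_op n beta b w in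
  PB (n - 1) P F a
    = (- Ci / 2) * ((P a * F a + Q a) * ((z + w) / (z - w)) - P a - Q a * F a)
  /\ PB (n - 1) Q F a = - F a * PB (n - 1) P F a
  /\ (w <> RtoC 0 -> F a + 1 <> RtoC 0 ->
      let W := (- Ci / 2) * (((P a + Q a) + z * (P a - Q a) * f a) / (z - w)) in
      PB (n - 1) P f a = (1 - w * f a) * W
      /\ PB (n - 1) Q f a = - (1 + w * f a) * W).
Proof.
  intros _ _ _ Hzw HPw; cbv zeta.
  pose proof (Cminus_eq_contra _ _ Hzw) as Hzw'.
  split; [|split; [|intros Hw HF; rewrite !(PB_fn_r _ _ _ _ _ _ HPw Hw HF)]];
    rewrite !(PB_Fn_r _ _ _ _ _ _ HPw), !Pn_op_fun, !Qn_op_fun, !(PB_Pn_vec _ _ _ _ _ _ _ Hzw);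
    unfold det2; cbn [fst snd].
  - unfold Fn_op; field; auto.
  - unfold Fn_op; field; auto.
  - assert (HPQ : - Qn_op n beta a w + Pn_op n beta a w <> 0).
    { intros E; apply HF; unfold Fn_op.
      replace (- Qn_op n beta a w / Pn_op n beta a w + 1)
        with ((- Qn_op n beta a w + Pn_op n beta a w) / Pn_op n beta a w) by (field; exact HPw).
      rewrite E; field; exact HPw. }
    unfold fn_op, Fn_op; split; field; auto.
Qed.
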